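(* Let $S=\{1,\dots,n\}$ (servers) and $C=\{1,\dots,m\}$ (contents), let $U_s>0$ and integers $d_s\ge 1$ be given for $s\in S$, and let $\lambda_c\ge 0$ be given for $c\in C$. Let $\mathcal{A}$ be the set of binary matrices $A=(a_{sc})\in\{0,1\}^{S\times C}$ with $\sum_{c\in C}a_{sc}\le d_s$ for all $s\in S$. For $A\in\mathcal{A}$, let $\mathcal{B}(A,\Lambda)$ be the set of matrices $B=(b_{sc})_{s\in S,c\in C}$ with nonnegative real entries satisfying $\sum_{c\in C}b_{sc}\le U_s$ for all $s\in S$, $\sum_{s\in S}b_{sc}\le \lambda_c$ for all $c\in C$, and $\mathbb{1}(b_{sc}>0)\le a_{sc}$ for all $(s,c)$. Consider \[ \text{(P1)}\qquad \max_{A\in\mathcal{A}}\ \max_{B\in\mathcal{B}(A,\Lambda)}\ \sum_{s\in S}\sum_{c\in C} b_{sc}, \] and \[ \text{(P2)}\qquad \max_{Z=(z_{sc})}\ \sum_{s\in S}\sum_{c\in C} z_{sc}\quad\text{s.t. } \sum_{c\in C}z_{sc}\le U_s\ \forall s,\ \ \sum_{s\in S}z_{sc}\le\lambda_c\ \forall c,\ \ \sum_{c\in C}\mathbb{1}(z_{sc}>0)\le d_s\ \forall s,\ \ z_{sc}\in\mathbb{R}_+ . \] Then problems (P1) and (P2) are equivalent (in particular, they have the same optimal value). Furthermore, if $Z^*=(z^*_{sc})$ is an optimal solution of (P2), then the matrix $A^*$ defined by $a^*_{sc}=\mathbb{1}(z^*_{sc}>0)$ for all $(s,c)\in S\times C$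 is an optimal solution (optimal allocation) of (P1).
   Context: $\mathbb{1}(\cdot)$ denotes the indicator function. $\Lambda=(\lambda_c)_{c\in C}$ is the vector of content popularities (arrival rates). $a_{sc}=1$ means content $c$ is stored in the cache of server $s$; $b_{sc}$ is the amount of requests of content $c$ matched to server $s$. *)

From mathcomp Require Import all_boot all_order all_algebra.
From mathcomp Require Import reals.
Set Implicit Arguments. Unset Strict Implicit. Unset Printing Implicit Defensive.
Import Order.TTheory GRing.Theory Num.Theory.
Local Open Scope ring_scope.

Definition ind (P : bool) : nat := P.

Section Caching.
Variables (R : realType) (n m : nat).
Variables (U : 'I_n -> R) (d : 'I_n -> nat) (lam : 'I_m -> R).

Definition allocA (A : 'M[bool]_(n, m)) : Prop :=
  forall s : 'I_n, (\sum_(c < m) ind (A s c) <= d s)%N.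

Definition matchB (A : 'M[bool]_(n, m)) (B : 'M[R]_(n, m)) : Prop :=
  [/\ forall s c, 0 <= B s c,
      forall s : 'I_n, \sum_(c < m) B s c <= U s,
      forall c : 'I_m, \sum_(s < n) B s c <= lam c
    & forall s c, (ind (0 < B s c)%R <= ind (A s c))%N].

Definition obj (B : 'M[R]_(n, m)) : R := \sum_(s < n) \sum_(c < m) B s c.

Definition feasP1 (A : 'M[bool]_(n, m)) (B : 'M[R]_(n, m)) : Prop :=
  allocA A /\ matchB A B.

Definition feasP2 (Z : 'M[R]_(n, m)) : Prop :=
  [/\ forall s c, 0 <= Z s c,
      forall s : 'I_n, \sum_(c < m) Z s c <= U s,
      forall c : 'I_m, \sum_(s < n) Z s c <= lam c
    & forall s : 'I_n, (\sum_(c < m) ind (0 < Z s c)%R <= d s)%N].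

Definition optP2 (Z : 'M[R]_(n, m)) : Prop :=
  feasP2 Z /\ forall Z', feasP2 Z' -> obj Z' <= obj Z.

Definition opt_alloc_P1 (A : 'M[bool]_(n, m)) : Prop :=
  allocA A /\ exists B, matchB A B /\
    forall A' B', feasP1 A' B' -> obj B' <= obj B.

End Caching.

From mathcomp Require Import all_boot all_order all_algebra.
From mathcomp Require Import reals.
Set Implicit Arguments. Unset Strict Implicit. Unset Printing Implicit Defensive.
Import Order.TTheory GRing.Theory Num.Theory.
Local Open Scope ring_scope.

(* A feasible pair (A, B) of (P1) makes B feasible for (P2), since the support
   of B lies inside that of A; conversely a feasible Z of (P2) is feasible for
   (P1) together with its own support as allocation. Both problems thus range
   over the same matrices with the same objective. *)

Section Equivalence.
Variables (R : realType) (n m : nat).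
Variables (U : 'I_n -> R) (d : 'I_n -> nat) (lam : 'I_m -> R).

Definition support_mx (Z : 'M[R]_(n, m)) : 'M[bool]_(n, m) :=
  \matrix_(s, c) (0 < Z s c).

Lemma feasP1_feasP2 A B : feasP1 U d lam A B -> feasP2 U d lam B.
Proof.
move=> [hA [B_ge0 B_row B_col B_supp]]; split=> // s.
by apply: leq_trans (hA s); apply: leq_sum => c _; exact: B_supp.
Qed.

Lemma feasP2_feasP1_support Z :
  feasP2 U d lam Z -> feasP1 U d lam (support_mx Z) Z.
Proof.
move=> [Z_ge0 Z_row Z_col Z_deg]; split.
  by move=> s; under eq_bigr => c _ do rewrite mxE; exact: Z_deg.
by split=> // s c; rewrite mxE.
Qed.

Lemma optP2_opt_alloc_P1 Z :
  optP2 U d lam Z -> opt_alloc_P1 U d lam (support_mx Z).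
Proof.
move=> [feasZ Z_max]; have [allocZ matchZ] := feasP2_feasP1_support feasZ.
split=> //; exists Z; split=> // A' B' feasAB.
exact/Z_max/(feasP1_feasP2 feasAB).
Qed.

End Equivalence.

Theorem proposition1 (R : realType) (n m : nat)
  (U : 'I_n -> R) (d : 'I_n -> nat) (lam : 'I_m -> R)
  (hU : forall s, 0 < U s) (hd : forall s, (1 <= d s)%N)
  (hlam : forall c, 0 <= lam c) :
  (* (P1) and (P2) have exactly the same set of attainable objective values
     (hence the same optimal value), and optima correspond *)
  (forall v : R,
     (exists A B, feasP1 U d lam A B /\ obj B = v) <->
     (exists Z, feasP2 U d lam Z /\ obj Z = v)) /\
  (forall Z : 'M[R]_(n, m), optP2 U d lam Z ->
     opt_alloc_P1 U d lam (\matrix_(s, c) (0 < Z s c))).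
Proof.
split; last exact: optP2_opt_alloc_P1.
move=> v; split.
  move=> [A [B [feasAB <-]]]; exists B.
  by split=> //; exact: feasP1_feasP2 feasAB.
move=> [Z [feasZ <-]]; exists (support_mx Z), Z.
by split=> //; exact: feasP2_feasP1_support.
Qed.
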